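(* In the weighted transaction packaging game described in the context, let $\mathrm{sum}=\sum_{\mathsf{tx}'\in M}s(\mathsf{tx}')$ and $$\hat p^{\mathrm{real}}(\mathsf{tx})=\frac{1}{\mathrm{sum}}\left(k+\sum_{\mathsf{tx}''\in M}s(\mathsf{tx}'')\frac{\ln v(\mathsf{tx})-\ln v(\mathsf{tx}'')}{\lambda}\right)\quad(\mathsf{tx}\in M).$$ For $x\in\mathbb{R}$ define $p^{\mathrm{real}}_x:M\to\mathbb{R}$ by $p^{\mathrm{real}}_x(\mathsf{tx})=0$ if $\hat p^{\mathrm{real}}(\mathsf{tx})\le x$, $p^{\mathrm{real}}_x(\mathsf{tx})=\hat p^{\mathrm{real}}(\mathsf{tx})-x$ if $x<\hat p^{\mathrm{real}}(\mathsf{tx})<x+1$, and $p^{\mathrm{real}}_x(\mathsf{tx})=1$ if $\hat p^{\mathrm{real}}(\mathsf{tx})\ge x+1$. Let $\hat x$ be the smallest real solution of the equation $\sum_{\mathsf{tx}\in M}\min(\max(\hat p^{\mathrm{real}}(\mathsf{tx})-x,0),1)\,s(\mathsf{tx})=k$. Then (1) $p^{\mathrm{real}}_{\hat x}(\mathsf{tx})\in[0,1]$ for all $\mathsf{tx}\in M$, and (2) $\sum_{\mathsf{tx}\in M}p^{\mathrm{real}}_{\hat x}(\mathsf{tx})s(\mathsf{tx})=k$. Furthermore, if there is a mixed strategy $\sigma$ with $p^\sigma(\mathsf{tx})=p^{\mathrm{real}}_{\hat x}(\mathsf{tx})$ for all $\mathsf{tx}\in M$, then $\sigma$ is an equilibrium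 strategy.
   Context: Weighted transaction packaging game. Fix a real $k>0$ (block capacity), a real $\lambda>0$ (network latency parameter), a finite set $M$ (the mempool) of transactions, a gas price function $v:M\to(0,\infty)$, and a size function $s:M\to(0,\infty)$ (block capacity used by each transaction), with $\sum_{\mathsf{tx}\in M}s(\mathsf{tx})\ge k$. Miners are indexed by $i\in[0,1]$. A pure strategy of a miner is a subset $D\subseteq M$ with $\sum_{\mathsf{tx}\in D}s(\mathsf{tx})\le k$; a mixed strategy is a probability distribution $\sigma$ on such subsets, with marginal probability $p^\sigma(\mathsf{tx})=\sum_D\sigma(D)\mathbf{1}[\mathsf{tx}\in D]$. Conditional on miner $i$ mining a block $B_i$ (drawn from her mixed strategy $\sigma_i$), the number $\gamma$ of other blocks mined is distributed as $\mathrm{Poisson}(\lambda)$; they are mined by miners chosen independently and uniformly at random from $[0,1]$, each such miner $j$ producing a block $B_j$ drawn independently from her mixed strategy $\sigma_j$. A transaction $\mathsf{tx}$ in $B_i$ pays gas fee $s(\mathsf{tx})v(\mathsf{tx})$ to miner $i$ only if no other mined block contains it, so the utility of miner $i$ is $u_i(\sigma_i,\sigma_{-i})=\sum_{\mathsf{tx}\in M}p^{\sigma_i}(\mathsf{tx})\,s(\mathsf{tx})\,v(\mathsf{tx})\,\Pr[\text{no other mined block }B_j\ (j\neq i)\text{ contains }\mathsf{tx}]$. A mixed strategy $\sigma^*$ is an equilibrium strategy if for every $i\in[0,1]$ and every mixed strategy $\sigma$, $u_i(\sigma,\sigma^*_{-i})\le u_i(\sigma^*,\sigma^*_{-i})$,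 where $\sigma^*_{-i}$ denotes the profile in which all miners other than $i$ use $\sigma^*$. *)

From mathcomp Require Import all_boot all_order all_algebra.
From mathcomp Require Import all_classical all_reals all_analysis.
Set Implicit Arguments. Unset Strict Implicit. Unset Printing Implicit Defensive.
Import Order.TTheory GRing.Theory Num.Theory.
Import numFieldNormedType.Exports.
Local Open Scope ring_scope.

Section Game.
Variables (R : realType) (M : finType).

Definition feasible (k : R) (s : M -> R) (D : {set M}) : bool :=
  \sum_(tx in D) s tx <= k.

Definition mixed (k : R) (s : M -> R) (sigma : {ffun {set M} -> R}) : Prop :=
  [/\ forall D, 0 <= sigma D,
      forall D, ~~ feasible k s D -> sigma D = 0
    & \sum_D sigma D = 1].

Definition marginal (sigma : {ffun {set M} -> R}) (tx : M) : R :=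
  \sum_D sigma D * (tx \in D)%:R.

(* probability that none of n blocks, drawn independently from tau,
   contains tx *)
Definition none_of_n (tau : {ffun {set M} -> R}) (tx : M) (n : nat) : R :=
  \sum_(B : {ffun 'I_n -> {set M}})
     (\prod_(j < n) tau (B j)) * ([forall j, tx \notin B j])%:R.

Definition poisson (lambda : R) (n : nat) : R :=
  expR (- lambda) * lambda ^+ n / n`!%:R.

(* Pr[no other mined block contains tx], when the number of other blocks is
   Poisson(lambda) and each other block is drawn independently from tau *)
Definition no_other (lambda : R) (tau : {ffun {set M} -> R}) (tx : M) : R :=
  limn (series (fun n => poisson lambda n * none_of_n tau tx n)).

(* utility of a miner playing sigma while all other miners play tau *)
Definition utility (lambda : R) (s v : M -> R)
    (sigma tau : {ffun {set M} -> R}) : R :=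
  \sum_tx marginal sigma tx * s tx * v tx * no_other lambda tau tx.

(* equilibrium strategy (the utility does not depend on the miner's index
   i ∈ [0,1] since all other miners play sigmastar) *)
Definition equilibrium (k lambda : R) (s v : M -> R)
    (sigmastar : {ffun {set M} -> R}) : Prop :=
  mixed k s sigmastar /\
  forall i : R, 0 <= i <= 1 ->
  forall sigma, mixed k s sigma ->
    utility lambda s v sigma sigmastar <= utility lambda s v sigmastar sigmastar.

Definition phat (k lambda : R) (s v : M -> R) (tx : M) : R :=
  (k + \sum_(tx'' : M) s tx'' * ((ln (v tx) - ln (v tx'')) / lambda))
  / \sum_(tx' : M) s tx'.

Definition preal (k lambda : R) (s v : M -> R) (x : R) (tx : M) : R :=
  let ph := phat k lambda s v tx in
  if ph <= x then 0 else if ph < x + 1 then ph - x else 1.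

Definition clamp_sum (k lambda : R) (s v : M -> R) (x : R) : R :=
  \sum_(tx : M)
    Num.min (Num.max (phat k lambda s v tx - x) 0) 1 * s tx.

End Game.

(* Given the marginals p of the other miners, a transaction tx in one's block is
   paid with probability exp(-λ p(tx)) (the Poisson(λ) competing blocks, thinned
   by p(tx), miss tx).  A miner's utility is therefore linear in her own marginals
   q, with value s(tx) v(tx) exp(-λ p(tx)), and her best response solves a
   fractional knapsack over q ∈ [0,1], Σ q s ≤ k.  Since v(tx) = exp(c + λ p̂(tx))
   for a constant c, the value per unit of size is exp(c + λ(p̂(tx) - p(tx))):
   for p = p^real_x̂ it equals the threshold exp(c + λ x̂) where 0 < p < 1, is
   below it where p = 0 and above it where p = 1.  So p is a greedy knapsack
   optimum that fills the block exactly, hence a best response to itself. *)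
From Pilot Require Import Defs.
From mathcomp Require Import all_boot all_order all_algebra.
From mathcomp Require Import all_classical all_reals all_analysis.
From mathcomp Require Import ring lra.
Import Order.TTheory GRing.Theory Num.Theory.
Local Open Scope ring_scope.

Section FractionalKnapsack.
Context {R : realDomainType} {I : finType} {k W : R} {s w p : I -> R}.

Hypothesis s_ge0 : forall i, 0 <= s i.
Hypothesis W_ge0 : 0 <= W.
Hypothesis p_full : \sum_i p i * s i = k.
Hypothesis w_le_threshold : forall i, p i < 1 -> w i <= W.
Hypothesis w_ge_threshold : forall i, 0 < p i -> W <= w i.

Lemma threshold_shift_le i (q : R) :
  0 <= q <= 1 -> (q - p i) * w i <= (q - p i) * W.
Proof.
case/andP=> q_ge0 q_le1.
have [lt_pq | le_qp] := ltP (p i) q.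
  apply: ler_wpM2l; first by rewrite subr_ge0 ltW.
  exact/w_le_threshold/(lt_le_trans lt_pq).
have [eq_qp | lt_qp] := eqVneq q (p i); first by rewrite eq_qp subrr !mul0r.
apply: ler_wnM2l; first by rewrite subr_le0.
by apply/w_ge_threshold/(le_lt_trans q_ge0); rewrite lt_neqAle lt_qp le_qp.
Qed.

Lemma fractional_knapsack_opt (q : I -> R) :
  (forall i, 0 <= q i <= 1) -> \sum_i q i * s i <= k ->
  \sum_i q i * s i * w i <= \sum_i p i * s i * w i.
Proof.
move=> q01 q_le_k; rewrite -subr_le0 -sumrB.
apply: (@le_trans _ _ (W * (\sum_i q i * s i - k))).
  rewrite -p_full -sumrB mulr_sumr; apply: ler_sum => i _.
  have := ler_wpM2r (s_ge0 i) (threshold_shift_le i (q i) (q01 i)); lra.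
by rewrite mulr_ge0_le0 // subr_le0.
Qed.

End FractionalKnapsack.

Section Game.
Context {R : realType} {M : finType}.
Implicit Types (sigma tau : {ffun {set M} -> R}) (tx : M).

Lemma marginal_ge0 sigma tx : (forall D, 0 <= sigma D) -> 0 <= marginal sigma tx.
Proof. by move=> sigma_ge0; apply: sumr_ge0 => D _; rewrite mulr_ge0. Qed.

Lemma marginal_le1 sigma tx :
  (forall D, 0 <= sigma D) -> \sum_D sigma D = 1 -> marginal sigma tx <= 1.
Proof.
move=> sigma_ge0 <-; apply: ler_sum => D _.
by rewrite ler_piMr // lern1 leq_b1.
Qed.

Lemma mixed_marginal_size k (s : M -> R) sigma :
  mixed k s sigma -> \sum_tx marginal sigma tx * s tx <= k.
Proof.
case=> sigma_ge0 infeasible0 sigma1.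
have -> : \sum_tx marginal sigma tx * s tx = \sum_D sigma D * \sum_(tx in D) s tx.
  under eq_bigr => tx _ do rewrite /marginal mulr_suml.
  rewrite exchange_big; apply: eq_bigr => D _.
  rewrite mulr_sumr [RHS]big_mkcond; apply: eq_bigr => tx _.
  by case: (tx \in D); rewrite /= ?mulr1 ?mulr0 ?mul0r.
rewrite -[k]mul1r -sigma1 mulr_suml; apply: ler_sum => D _.
have [/= size_le_k | /infeasible0 ->] := boolP (feasible k s D); last by rewrite !mul0r.
exact: ler_wpM2l.
Qed.

Lemma none_of_nE tau tx n :
  \sum_D tau D = 1 -> none_of_n tau tx n = (1 - marginal tau tx) ^+ n.
Proof.
move=> tau1; rewrite /none_of_n.
transitivity (\sum_(B : {ffun 'I_n -> {set M}})
   \prod_(j < n) (tau (B j) * (tx \notin B j)%:R)).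
  apply: eq_bigr => B _; rewrite big_split /=; congr (_ * _).
  have [/forallP txNB | /forallPn [j txBj]] := boolP [forall j, tx \notin B j].
    by rewrite big1 // => j _; rewrite txNB.
  by rewrite (bigD1 j) //= (negbTE txBj) mul0r.
rewrite -(bigA_distr_bigA (fun _ D => tau D * (tx \notin D)%:R)).
rewrite prodr_const card_ord /marginal -[X in X - _]tau1 -sumrB.
congr (_ ^+ _); apply: eq_bigr => D _.
by case: (tx \in D); rewrite /= ?mulr0 ?mulr1 ?subrr ?subr0.
Qed.

Lemma no_otherE lambda tau tx :
  \sum_D tau D = 1 -> no_other lambda tau tx = expR (- (lambda * marginal tau tx)).
Proof.
move=> tau1; rewrite /no_other.
have -> : (fun n => poisson lambda n * none_of_n tau tx n) =
    expR (- lambda) *: exp_coeff (lambda * (1 - marginal tau tx)).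
  apply/funext => n; rewrite /poisson none_of_nE // /exp_coeff.
  by rewrite /GRing.scale /= /GRing.scale /= exprMn; ring.
rewrite seriesZ limZl_tmp; last exact: is_cvg_series_exp_coeff.
rewrite -/(expR _) /GRing.scale /= -expRD; congr expR; ring.
Qed.

Lemma utilityE lambda (s v : M -> R) sigma tau :
  \sum_D tau D = 1 ->
  utility lambda s v sigma tau =
  \sum_tx marginal sigma tx * s tx * (v tx * expR (- (lambda * marginal tau tx))).
Proof. by move=> tau1; apply: eq_bigr => tx _; rewrite no_otherE // !mulrA. Qed.

Context {k lambda : R} {s v : M -> R}.
Local Notation phat := (phat k lambda s v).
Local Notation preal := (preal k lambda s v).

Lemma prealE x tx : preal x tx = Num.min (Num.max (phat tx - x) 0) 1.
Proof.
rewrite /preal; have [ph_le_x | x_lt_ph] := leP (phat tx) x.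
  have /max_idPr -> : phat tx - x <= 0 by rewrite subr_le0.
  by rewrite (min_idPl ler01).
have /max_idPl -> : 0 <= phat tx - x by rewrite subr_ge0 ltW.
have [ph_lt | ph_ge] := ltP (phat tx) (x + 1).
  by apply/esym/min_idPl; rewrite lerBlDl ltW.
by apply/esym/min_idPr; rewrite lerBrDl.
Qed.

Lemma preal_ge0 x tx : 0 <= preal x tx.
Proof. by rewrite prealE le_min ler01 le_max lexx orbT. Qed.

Lemma preal_le1 x tx : preal x tx <= 1.
Proof. by rewrite prealE ge_min lexx orbT. Qed.

Lemma sum_preal_size x : \sum_tx preal x tx * s tx = clamp_sum k lambda s v x.
Proof. by apply: eq_bigr => tx _; rewrite prealE. Qed.

Lemma phat_sub_preal_le x tx : preal x tx < 1 -> phat tx - preal x tx <= x.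
Proof.
rewrite /preal; case: (leP (phat tx) x); last case: (ltP (phat tx) (x + 1)).
all: by move=> *; lra.
Qed.

Lemma phat_sub_preal_ge x tx : 0 < preal x tx -> x <= phat tx - preal x tx.
Proof.
rewrite /preal; case: (leP (phat tx) x); last case: (ltP (phat tx) (x + 1)).
all: by move=> *; lra.
Qed.

Hypotheses (lambda_gt0 : 0 < lambda) (v_gt0 : forall tx, 0 < v tx).
Hypothesis size_neq0 : \sum_tx s tx != 0.
Local Notation c := ((\sum_t s t * ln (v t) - lambda * k) / \sum_t s t).

Lemma v_expR_phat tx : v tx = expR (c + lambda * phat tx).
Proof.
rewrite -[LHS]lnK ?posrE // /Defs.phat; congr expR.
have lambda_neq0 : lambda != 0 by rewrite gt_eqF.
have -> : \sum_t s t * ((ln (v tx) - ln (v t)) / lambda) =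
    (ln (v tx) * \sum_t s t - \sum_t s t * ln (v t)) / lambda.
  rewrite mulr_sumr -sumrB mulr_suml; apply: eq_bigr => t _; field.
  exact: lambda_neq0.
by field; apply/andP.
Qed.

Lemma preal_valueE x tx :
  v tx * expR (- (lambda * preal x tx)) = expR (c + lambda * (phat tx - preal x tx)).
Proof. by rewrite {1}v_expR_phat -expRD mulrBr addrA. Qed.

Lemma preal_value_le x tx :
  preal x tx < 1 -> v tx * expR (- (lambda * preal x tx)) <= expR (c + lambda * x).
Proof.
move=> /phat_sub_preal_le le_x.
by rewrite preal_valueE ler_expR lerD2l ler_pM2l.
Qed.

Lemma preal_value_ge x tx :
  0 < preal x tx -> expR (c + lambda * x) <= v tx * expR (- (lambda * preal x tx)).
Proof.
move=> /phat_sub_preal_ge ge_x.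
by rewrite preal_valueE ler_expR lerD2l ler_pM2l.
Qed.

End Game.

Theorem theorem4p1 (R : realType) (M : finType) (k lambda : R)
    (v s : M -> R) (xhat : R) :
  0 < k -> 0 < lambda ->
  (forall tx, 0 < v tx) -> (forall tx, 0 < s tx) ->
  k <= \sum_(tx : M) s tx ->
  clamp_sum k lambda s v xhat = k ->
  (forall x : R, clamp_sum k lambda s v x = k -> xhat <= x) ->
  [/\ (forall tx, 0 <= preal k lambda s v xhat tx <= 1),
      \sum_(tx : M) preal k lambda s v xhat tx * s tx = k
    & forall sigma : {ffun {set M} -> R},
        mixed k s sigma ->
        (forall tx, marginal sigma tx = preal k lambda s v xhat tx) ->
        equilibrium k lambda s v sigma].
Proof.
move=> k_gt0 lambda_gt0 v_gt0 s_gt0 k_le_size clamp_xhat _.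
have size_neq0 : \sum_tx s tx != 0 by rewrite gt_eqF // (lt_le_trans k_gt0).
have preal_full : \sum_tx preal k lambda s v xhat tx * s tx = k.
  by rewrite sum_preal_size.
split=> // [tx | sigma mixed_sigma marginal_sigma].
  by rewrite preal_ge0 preal_le1.
split=> // _ _ sigma' mixed_sigma'.
have sigma1 : \sum_D sigma D = 1 by case: mixed_sigma.
rewrite !utilityE //.
have -> : marginal sigma = preal k lambda s v xhat by apply/funext.
have W_le := preal_value_le (k := k) lambda_gt0 v_gt0 size_neq0 xhat.
have W_ge := preal_value_ge (k := k) lambda_gt0 v_gt0 size_neq0 xhat.
have [sigma'_ge0 _ sigma'1] := mixed_sigma'.
apply: (fractional_knapsack_opt _ _ preal_full W_le W_ge).
- by move=> tx; rewrite ltW.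
- exact: expR_ge0.
- by move=> tx; rewrite marginal_ge0 ?marginal_le1.
- exact: mixed_marginal_size.
Qed.
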